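(* Let $G$ be a bipartite graph with at most one isolated vertex and no connected component consisting of a single edge, and let $s=s(G)$ be its irregularity strength. Then $G$ contains a spanning subgraph $H$ with $m(H)\le 2s-1$. If moreover $G$ is regular, then $G$ contains a spanning subgraph $H$ with $m(H)\le 2s-3$.
   Context: All graphs are finite and simple. For a graph $G$ and integer $k\ge0$, $m(G,k)$ is the number of vertices of degree exactly $k$ in $G$ and $m(G)=\max_k m(G,k)$. For a graph $G=(V,E)$ with at most one isolated vertex and no isolated edges (components isomorphic to $K_2$), the irregularity strength $s(G)$ is the smallest positive integer $s$ such that there is a function $w:E\to\{1,2,\dots,s\}$ for which the sums $\sum_{e\ni v}w(e)$, $v\in V$, are pairwise distinct. *)

(* A simple graph on a finite vertex type T is a symmetric,
   irreflexive relation e : rel T. *)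
From mathcomp Require Import all_boot.
Set Implicit Arguments. Unset Strict Implicit. Unset Printing Implicit Defensive.

Section Graphs.
Variable T : finType.

Definition simple_graph (e : rel T) : Prop := irreflexive e /\ symmetric e.

Definition deg (e : rel T) (v : T) : nat := #|[set u | e v u]|.

(* m(G,k) and m(G) = max_k m(G,k); degrees are at most #|T| *)
Definition mk (e : rel T) (k : nat) : nat := #|[set v | deg e v == k]|.
Definition mG (e : rel T) : nat := \max_(k < #|T|.+1) mk e k.

Definition bipartite (e : rel T) : Prop :=
  exists A : {set T}, forall u v, e u v -> (u \in A) != (v \in A).

Definition regular (e : rel T) : Prop := exists d, forall v, deg e v = d.

Definition at_most_one_isolated (e : rel T) : Prop :=
  forall u v, deg e u = 0 -> deg e v = 0 -> u = v.

(* no component isomorphic to K2: no edge uv with both endpoints of degree 1 *)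
Definition no_isolated_edge (e : rel T) : Prop :=
  forall u v, e u v -> ~ (deg e u = 1 /\ deg e v = 1).

Definition spanning_subgraph (e h : rel T) : Prop :=
  symmetric h /\ forall u v, h u v -> e u v.

(* edge weighting w (given on ordered pairs, required symmetric on edges)
   with values in {1..s}; weighted degree = sum of weights of incident edges *)
Definition wdeg (e : rel T) (w : T -> T -> nat) (v : T) : nat :=
  \sum_(u | e v u) w v u.

Definition irregular_weighting (e : rel T) (s : nat) (w : T -> T -> nat) : Prop :=
  (forall u v, e u v -> w u v = w v u /\ 1 <= w u v <= s) /\
  injective (wdeg e w).

Definition irregularity_strength (e : rel T) (s : nat) : Prop :=
  0 < s /\ (exists w, irregular_weighting e s w) /\
  forall s', 0 < s' -> (exists w, irregular_weighting e s' w) -> s <= s'.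

End Graphs.

(* The core of
   the proof is a rounding lemma (balanced_subgraph): for symmetric weights
   c in [0..s] on a bipartite graph there is a spanning subgraph R with
   |s deg_R(v) - load(v)| < s at every vertex, load(v) being the c-weighted
   degree.  Vertices of R-degree k then have loads in an open interval of
   length 2s, so injectivity of the load gives m(R) <= 2s-1 (mG_bound).  For
   a d-regular G the weights w-1 in [0..s-1] have loads wdeg(v) - d, still
   distinct, whence m(R) <= 2(s-1)-1 = 2s-3; here s >= 2 because an
   all-ones weighting of a regular graph is not irregular.

   The rounding lemma is proved with a potential: among spanning subgraphs
   take R minimising Phi(R) = sum_v (s deg_R v - load v)^2.  Toggling an
   R-alternating path changes only the degrees of its two ends, so by
   minimality the signed discrepancy cannot drop by more than s along such a
   path.  If a vertex w were overloaded by s or more, the set of vertices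
   from which w is reachable would have positive total signed discrepancy,
   whereas edges inside it cancel in pairs and edges leaving it contribute
   non-positively.  This bounds discrepancies from above; the bound from
   below is the same statement for the complement of R with weights s - c.
*)

From mathcomp Require Import all_boot all_order all_algebra zify ring.
Import GRing.Theory Num.Theory Order.TTheory.
Set Implicit Arguments. Unset Strict Implicit. Unset Printing Implicit Defensive.

Local Notation "n %:Z" := (Posz n).

Lemma deg_ext (T : finType) (R1 R2 : rel T) v :
  R1 v =1 R2 v -> deg R1 v = deg R2 v.
Proof. by move=> eqR; apply: eq_card => u; rewrite !inE eqR. Qed.

Lemma deg_sum (T : finType) (e R : rel T) v : (forall u w, R u w -> e u w) ->
  deg R v = \sum_(u | e v u) (R v u : nat).
Proof.
move=> subR; rewrite /deg -sum1_card big_mkcond [RHS]big_mkcond /=.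
apply: eq_bigr => u _; rewrite inE.
by case: (boolP (R v u)) => [/subR -> //|_]; case: (e v u).
Qed.

Section Flip.
Variable T : finType.

Definition flip (x y : T) (R : rel T) : rel T :=
  fun u v => R u v (+) ((u == x) && (v == y) || (u == y) && (v == x)).

Lemma flip_nbhd (R : rel T) x y : x != y -> symmetric R ->
  [set u | flip x y R x u] =
  if R x y then [set u | R x u] :\ y else y |: [set u | R x u].
Proof.
move=> nxy sR; apply/setP=> u; rewrite /flip eqxx (negPf nxy) /=.
by case Rxy: (R x y); rewrite !inE; have [->|] := eqVneq u y;
  rewrite ?Rxy ?andbF ?orbF ?addbF ?addbT.
Qed.

Lemma flipC (R : rel T) x y : flip x y R =2 flip y x R.
Proof. by move=> u v; rewrite /flip orbC. Qed.

Lemma deg_flip_end (R : rel T) x y : x != y -> symmetric R ->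
  ((deg (flip x y R) x)%:Z = (deg R x)%:Z + (if R x y then -1 else 1))%R.
Proof.
move=> nxy sR; rewrite /deg flip_nbhd //; case: ifP => Rxy.
  by rewrite (cardsD1 y [set u | R x u]) inE Rxy /=; lia.
by rewrite cardsU1 inE Rxy /=; lia.
Qed.

Lemma deg_flip_other (R : rel T) x y v : v != x -> v != y ->
  deg (flip x y R) v = deg R v.
Proof.
by move=> /negPf nvx /negPf nvy; apply: deg_ext => u; rewrite /flip nvx nvy addbF.
Qed.

Lemma deg_flip (R : rel T) x y v : x != y -> symmetric R ->
  ((deg (flip x y R) v)%:Z = (deg R v)%:Z +
     (((v == x) : nat)%:Z + ((v == y) : nat)%:Z) * (if R x y then -1 else 1))%R.
Proof.
move=> nxy sR; have [->|nvx] := eqVneq v x.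
  by rewrite deg_flip_end // (negPf nxy) mul1r.
have [->|nvy] := eqVneq v y.
  by rewrite (deg_ext (flipC R x y y)) deg_flip_end 1?eq_sym // sR add0r mul1r.
by rewrite deg_flip_other // mul0r addr0.
Qed.

End Flip.

Section AlternatingPaths.
Variables (T : finType) (e : rel T) (A : {set T}).
Hypothesis e_irr : irreflexive e.
Hypothesis e_sym : symmetric e.
Hypothesis e_bip : forall u v, e u v -> (u \in A) != (v \in A).

Definition alt_arc (R : rel T) : rel T :=
  fun u v => e u v && (if u \in A then ~~ R u v else R u v).

Fixpoint toggle (R : rel T) (x : T) (p : seq T) : rel T :=
  if p is y :: q then flip x y (toggle R y q) else R.

Definition side (u : T) : int := (if u \in A then 1 else -1)%R.

Lemma side_edge u v : e u v -> side v = (- side u)%R.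
Proof. by move=> /e_bip; rewrite /side; case: (u \in A); case: (v \in A). Qed.

Lemma toggle_out R x p u v : u \notin x :: p -> toggle R x p u v = R u v.
Proof.
elim: p x => [|y q IH] x //=; rewrite !inE negb_or => /andP[nux].
rewrite negb_or => /andP[nuy nuq].
by rewrite /flip IH ?inE ?negb_or ?nuy // (negPf nux) (negPf nuy) addbF.
Qed.

Lemma toggle_spanning R x p : spanning_subgraph e R ->
  path (alt_arc R) x p -> spanning_subgraph e (toggle R x p).
Proof.
elim: p x => [|y q IH] x //= sR /andP[/andP[exy _] pq].
have [sT subT] := IH y sR pq; split.
  by move=> u v; rewrite /flip sT orbC;
    case: (u == x); case: (v == y); case: (u == y); case: (v == x).
move=> u v; rewrite /flip; case: (boolP (toggle R y q u v)) => [/subT //|_] /=.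
by case/orP=> /andP[/eqP -> /eqP ->] //; rewrite e_sym.
Qed.

Lemma deg_toggle R x p v : spanning_subgraph e R ->
  path (alt_arc R) x p -> uniq (x :: p) ->
  ((deg (toggle R x p) v)%:Z = (deg R v)%:Z + ((v == x) : nat)%:Z * side x
     - ((v == last x p) : nat)%:Z * side (last x p))%R.
Proof.
elim: p x => [|y q IH] x sR /=; first by rewrite addrK.
move=> /andP[axy pq] /andP[xnin uq].
have [sT _] := toggle_spanning sR pq.
have nxy : x != y by apply: contraTneq axy => ->; rewrite /alt_arc e_irr.
rewrite deg_flip // IH // toggle_out //.
move: axy; rewrite /alt_arc /side => /andP[/e_bip].
case: (x \in A); case: (y \in A) => //= _.
  by move=> /negPf ->; lia.
by move=> ->; lia.
Qed.

End AlternatingPaths.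

Section Potential.
Variables (T : finType) (e : rel T) (c : T -> T -> nat) (s : nat).

Definition load (v : T) : nat := \sum_(u | e v u) c v u.

Definition discrepancy (R : rel T) (v : T) : int := ((s * deg R v)%:Z - (load v)%:Z)%R.

Definition potential (R : rel T) : int := (\sum_v discrepancy R v ^+ 2)%R.

Definition minimizer (R : rel T) : Prop := spanning_subgraph e R /\
  forall R', spanning_subgraph e R' -> (potential R <= potential R')%R.

Lemma potential_ext (R1 R2 : rel T) : R1 =2 R2 -> potential R1 = potential R2.
Proof. by move=> eqR; apply: eq_bigr => v _; rewrite /discrepancy (deg_ext (eqR v)). Qed.

Lemma discrepancy_sum (R : rel T) v : (forall u w, R u w -> e u w) ->
  discrepancy R v = (\sum_(u | e v u) ((s * (R v u : nat))%:Z - (c v u)%:Z))%R.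
Proof.
move=> subR; rewrite /discrepancy (deg_sum _ subR) /load sumrB mulnC PoszM.
rewrite !(big_morph Posz PoszD (erefl 0%:Z)) mulr_suml.
by congr (_ - _)%R; apply: eq_bigr => u _; rewrite PoszM mulrC.
Qed.

Hypothesis e_sym : symmetric e.

(* There are finitely many spanning subgraphs, so one minimises the potential. *)
Lemma exists_minimizer : exists R, minimizer R.
Proof.
pose sub_of (S : {set T * T}) : rel T :=
  fun u v => [&& e u v, (u, v) \in S & (v, u) \in S].
have [S _ minS] := @arg_minnP _ set0 xpredT (fun S => `|potential (sub_of S)|%N) erefl.
have pot_ge0 R : (0 <= potential R)%R by apply: sumr_ge0 => v _; apply: sqr_ge0.
exists (sub_of S); split.
  split=> u v; rewrite /sub_of; last by case/and3P.
  by rewrite e_sym; case: ((u, v) \in S); case: ((v, u) \in S); rewrite ?andbF.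
move=> R [sR subR]; have eqR : sub_of [set p | R p.1 p.2] =2 R.
  move=> u v; rewrite /sub_of !inE /= [R v u]sR andbb.
  by case: (boolP (R u v)) => [/subR ->|]; rewrite ?andbF.
have := minS [set p | R p.1 p.2] erefl; rewrite (potential_ext eqR).
by have := pot_ge0 (sub_of S); have := pot_ge0 R; lia.
Qed.

End Potential.

Lemma sum_antisym (T : finType) (S : {set T}) (h : T -> T -> int) :
  (forall u v, h u v = - h v u)%R -> (\sum_(u in S) \sum_(v in S) h u v = 0)%R.
Proof.
move=> h_anti; set X := (\sum_(u in S) _)%R.
suff : X = (- X)%R by lia.
rewrite {1}/X exchange_big -sumrN; apply: eq_bigr => v _.
by rewrite -sumrN; apply: eq_bigr => u _; rewrite h_anti.
Qed.

Section Minimizer.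
Variables (T : finType) (e : rel T) (A : {set T}) (c : T -> T -> nat) (s : nat).
Hypothesis e_irr : irreflexive e.
Hypothesis e_sym : symmetric e.
Hypothesis e_bip : forall u v, e u v -> (u \in A) != (v \in A).
Hypothesis c_sym : forall u v, e u v -> c u v = c v u.
Hypothesis c_le : forall u v, e u v -> c u v <= s.
Hypothesis s_gt0 : 0 < s.

Local Notation xv := (discrepancy e c s).
Local Notation side := (side A).
Local Notation alt_arc := (alt_arc e A).

Lemma discrepancy_toggle R x p v : spanning_subgraph e R ->
  path (alt_arc R) x p -> uniq (x :: p) ->
  xv (toggle R x p) v = (xv R v + s%:Z * (((v == x) : nat)%:Z * side x
     - ((v == last x p) : nat)%:Z * side (last x p)))%R.
Proof.
by move=> sR pth uq; rewrite /discrepancy !PoszM (deg_toggle e_irr e_sym e_bip) //; ring.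
Qed.

Lemma potential_toggle R x p : spanning_subgraph e R ->
  path (alt_arc R) x p -> uniq (x :: p) -> x != last x p ->
  let z := last x p in
  potential e c s (toggle R x p) = (potential e c s R
     + ((xv R x + s%:Z * side x) ^+ 2 - xv R x ^+ 2)
     + ((xv R z - s%:Z * side z) ^+ 2 - xv R z ^+ 2))%R.
Proof.
move=> sR pth uq nxz z; rewrite /potential (bigD1 x) // (bigD1 z) 1?eq_sym //=.
rewrite [in RHS](bigD1 x) // [in RHS](bigD1 z) 1?eq_sym //=.
rewrite (eq_bigr (fun v => xv R v ^+ 2)%R) => [|v /andP[/negPf nvx /negPf nvz]].
  rewrite !discrepancy_toggle // eqxx (negPf nxz) eq_sym (negPf nxz) eqxx /=; ring.
by rewrite discrepancy_toggle // nvx nvz /= !mul0r subrr mulr0 addr0.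
Qed.

(* If an alternating path leads from x to z, then at a minimiser the signed
   discrepancy at x is at least that at z minus s: otherwise toggling the
   path would decrease the potential. *)
Lemma reach_discrepancy R x z : minimizer e c s R -> connect (alt_arc R) x z ->
  (side z * xv R z - s%:Z <= side x * xv R x)%R.
Proof.
move=> [sR minR] /connectP[p pth ->{z}].
have [<-|nxz] := eqVneq x (last x p); first by lia.
move: nxz; case: (shortenP pth) => q pthq uq _ nxz.
have := minR _ (toggle_spanning e_sym sR pthq); rewrite potential_toggle //=.
by rewrite /side; case: (x \in A); case: (last x q \in A); nia.
Qed.

Lemma non_arc_nonpos R u v : symmetric R -> e u v -> ~~ alt_arc R v u ->
  (side u * ((s * (R u v : nat))%:Z - (c u v)%:Z) <= 0)%R.
Proof.
move=> sR euv; rewrite /alt_arc e_sym euv /= (sR v u) /side.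
have := e_bip euv; have := c_le euv.
by case: (u \in A); case: (v \in A); case: (R u v) => //=; lia.
Qed.

(* Cut lemma: on a set S that no alternating arc enters, the signed
   discrepancies sum to at most 0.  Edges inside S cancel in pairs and the
   edges leaving S contribute non-positively. *)
Lemma cut_discrepancy R (S : {set T}) : spanning_subgraph e R ->
  (forall u v, u \in S -> alt_arc R v u -> v \in S) ->
  (\sum_(u in S) side u * xv R u <= 0)%R.
Proof.
move=> [sR subR] closedS.
pose g u v : int := (side u * ((s * (R u v : nat))%:Z - (c u v)%:Z))%R.
have -> : (\sum_(u in S) side u * xv R u =
    \sum_(u in S) \sum_(v in S) (if e u v then g u v else 0) +
    \sum_(u in S) \sum_(v | e u v && (v \notin S)) g u v)%R.
  rewrite -big_split /=; apply: eq_bigr => u _.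
  rewrite discrepancy_sum // mulr_sumr (bigID (mem S)) /= -big_mkcondr.
  by congr (_ + _)%R; apply: eq_bigl => v; rewrite andbC.
rewrite sum_antisym ?add0r => [|u v].
  apply: sumr_le0 => u uS; apply: sumr_le0 => v /andP[euv vS].
  by apply: non_arc_nonpos => //; apply: contra vS; apply: closedS.
have [euv|] := boolP (e u v); last by rewrite e_sym => /negPf ->; rewrite oppr0.
rewrite e_sym euv /g (side_edge e_bip euv) (sR v u) (c_sym euv); ring.
Qed.

Lemma minimizer_bound R w : minimizer e c s R -> w \in A -> (xv R w < s%:Z)%R.
Proof.
move=> minR wA; rewrite ltNge; apply/negP => over.
have side_w : side w = 1%R by rewrite /side wA.
pose S := [set u | connect (alt_arc R) u w].
have wS : w \in S by rewrite inE connect0.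
have S_pos u : u \in S -> (0 <= side u * xv R u)%R.
  by rewrite inE => /(reach_discrepancy minR); rewrite side_w; lia.
have : (xv R w <= \sum_(u in S) side u * xv R u)%R.
  rewrite (bigD1 w) //= side_w mul1r lerDl.
  by apply: sumr_ge0 => u /andP[/S_pos].
have closedS u v : u \in S -> alt_arc R v u -> v \in S.
  by rewrite !inE => uS avu; apply: connect_trans (connect1 avu) uS.
by have := cut_discrepancy minR.1 closedS; lia.
Qed.

End Minimizer.

Section Complement.
Variables (T : finType) (e : rel T) (c : T -> T -> nat) (s : nat).
Hypothesis e_sym : symmetric e.
Hypothesis c_le : forall u v, e u v -> c u v <= s.

Definition compl (R : rel T) : rel T := fun u v => e u v && ~~ R u v.

Local Notation c' := (fun u v => s - c u v).

Lemma compl_spanning (R : rel T) :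
  spanning_subgraph e R -> spanning_subgraph e (compl R).
Proof.
by case=> sR _; split=> u v; rewrite /compl; [rewrite e_sym sR | case/andP].
Qed.

Lemma compl_involutive (R : rel T) : spanning_subgraph e R -> compl (compl R) =2 R.
Proof.
case=> _ subR u v; rewrite /compl negb_and negbK.
by case: (boolP (R u v)) => [/subR ->|_]; rewrite ?orbF ?andbN.
Qed.

Lemma discrepancy_compl (R : rel T) v : (forall u w, R u w -> e u w) ->
  discrepancy e c' s (compl R) v = (- discrepancy e c s R v)%R.
Proof.
move=> subR; rewrite !discrepancy_sum // => [|u w /andP[]//].
rewrite -sumrN; apply: eq_bigr => u evu.
by have := c_le evu; rewrite /compl evu /=; case: (R v u) => /=; lia.
Qed.

Lemma potential_compl (R : rel T) : spanning_subgraph e R ->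
  potential e c' s (compl R) = potential e c s R.
Proof.
by case=> _ subR; apply: eq_bigr => v _; rewrite discrepancy_compl // sqrrN.
Qed.

Lemma compl_minimizer (R : rel T) : minimizer e c s R -> minimizer e c' s (compl R).
Proof.
case=> sR minR; split=> [|R' sR']; first exact: compl_spanning.
rewrite potential_compl // -(potential_ext _ _ _ (compl_involutive sR')).
have scR' := compl_spanning sR'.
by rewrite potential_compl //; apply: minR.
Qed.

End Complement.

(* At a minimiser every discrepancy is below s: apply minimizer_bound to the
   side of the bipartition containing v. *)
Lemma minimizer_upper (T : finType) (e : rel T) (c : T -> T -> nat) (s : nat)
    (R : rel T) (v : T) :
  irreflexive e -> symmetric e -> bipartite e ->
  (forall u w, e u w -> c u w = c w u) -> (forall u w, e u w -> c u w <= s) ->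
  0 < s -> minimizer e c s R -> (discrepancy e c s R v < s%:Z)%R.
Proof.
move=> e_irr e_sym [A bipA] c_sym c_le s_gt0 minR.
have [vA|vA] := boolP (v \in A); first exact: (minimizer_bound e_irr e_sym bipA).
have bipA' u w : e u w -> (u \in ~: A) != (w \in ~: A).
  by rewrite !inE => /bipA; case: (u \in A); case: (w \in A).
by apply: (minimizer_bound e_irr e_sym bipA') => //; rewrite inE.
Qed.

(* Take R minimising the potential; the lower bound is the upper
   bound for the complement of R with the weights s - c. *)
Lemma balanced_subgraph (T : finType) (e : rel T) (c : T -> T -> nat) (s : nat) :
  irreflexive e -> symmetric e -> bipartite e ->
  (forall u v, e u v -> c u v = c v u) -> (forall u v, e u v -> c u v <= s) ->
  0 < s -> exists R, spanning_subgraph e R /\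
    forall v, s * deg R v < load e c v + s /\ load e c v < s * deg R v + s.
Proof.
move=> e_irr e_sym e_bip c_sym c_le s_gt0.
have [R minR] := exists_minimizer c s e_sym.
have c'_sym u v : e u v -> s - c u v = s - c v u by move=> /c_sym ->.
have c'_le u v : e u v -> s - c u v <= s by rewrite leq_subr.
exists R; split=> [|v]; first exact: minR.1.
have upper := minimizer_upper v e_irr e_sym e_bip c_sym c_le s_gt0 minR.
have := minimizer_upper v e_irr e_sym e_bip c'_sym c'_le s_gt0
  (compl_minimizer e_sym c_le minR).
rewrite discrepancy_compl //; last by case: minR => -[].
by move: upper; rewrite /discrepancy; lia.
Qed.

(* Vertices of R-degree k have distinct loads in the open interval
   (s(k-1), s(k+1)), which holds 2s-1 integers. *)
Lemma mG_bound (T : finType) (R : rel T) (s : nat) (D : T -> nat) :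
  injective D ->
  (forall v, s * deg R v < D v + s /\ D v < s * deg R v + s) ->
  mG R <= 2 * s - 1.
Proof.
move=> D_inj D_near; apply/bigmax_leqP => k _; rewrite /mk cardE.
have uniqD : uniq (map D (enum [set v | deg R v == k])).
  by rewrite (map_inj_uniq D_inj) enum_uniq.
rewrite -(size_map D) -(size_iota (s * k + 1 - s) (2 * s - 1)).
apply: uniq_leq_size uniqD _ => x /mapP[v]; rewrite mem_enum inE => /eqP degv ->.
by rewrite mem_iota; have := D_near v; rewrite degv; lia.
Qed.

Lemma wdeg_shift (T : finType) (e : rel T) (w : T -> T -> nat) v :
  (forall u v, e u v -> 1 <= w u v) ->
  wdeg e w v = load e (fun x y => w x y - 1) v + deg e v.
Proof.
move=> w_ge1; rewrite /deg -sum1dep_card /wdeg /load -big_split /=.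
by apply: eq_bigr => u /w_ge1 w_ge1u; rewrite subnK.
Qed.

(* A regular graph with an edge has irregularity strength at least 2: with
   all weights equal to 1 the weighted degrees are the (equal) degrees. *)
Lemma regular_weighting_gt1 (T : finType) (e : rel T) (s : nat) w :
  irreflexive e -> regular e -> (exists u v, e u v) ->
  irregular_weighting e s w -> 1 < s.
Proof.
move=> e_irr [d e_reg] [u [v euv]] [w_ok w_inj]; rewrite ltnNge; apply/negP => s_le1.
have w_ge1 y z : e y z -> 1 <= w y z by case/w_ok => _ /andP[].
have wdeg_d x : wdeg e w x = d.
  rewrite (wdeg_shift _ w_ge1) e_reg.
  rewrite /load big1 // => y exy; have [_ /andP[]] := w_ok x y exy; lia.
by move: euv; rewrite (w_inj u v) ?e_irr ?wdeg_d.
Qed.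

(* The weighting itself, and for regular graphs the weighting lowered by one,
   are rounded by balanced_subgraph and counted by mG_bound. *)
Theorem theorem1p7 (T : finType) (e : rel T) (s : nat) :
  simple_graph e -> bipartite e ->
  at_most_one_isolated e -> no_isolated_edge e ->
  irregularity_strength e s ->
  (exists h : rel T, spanning_subgraph e h /\ mG h <= 2 * s - 1) /\
  (regular e -> (exists u v, e u v) ->
     exists h : rel T, spanning_subgraph e h /\ mG h <= 2 * s - 3).
Proof.
move=> [e_irr e_sym] e_bip _ _ [s_gt0 [[w w_irr] _]].
have [w_ok w_inj] := w_irr.
have w_sym u v : e u v -> w u v = w v u by move=> /w_ok[].
have w_ge1 u v : e u v -> 1 <= w u v by case/w_ok => _ /andP[].
have w_le u v : e u v -> w u v <= s by case/w_ok => _ /andP[].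
split.
  have [R [sR R_near]] := balanced_subgraph e_irr e_sym e_bip w_sym w_le s_gt0.
  by exists R; split=> //; apply: mG_bound w_inj R_near.
move=> e_reg e_edge; have s_gt1 := regular_weighting_gt1 e_irr e_reg e_edge w_irr.
have [d deg_d] := e_reg.
pose c u v := w u v - 1.
have c_inj : injective (load e c).
  by move=> x y eq_xy; apply: w_inj; rewrite !(wdeg_shift _ w_ge1) eq_xy !deg_d.
have c_sym u v : e u v -> c u v = c v u by move=> /w_sym; rewrite /c => ->.
have c_le u v : e u v -> c u v <= s - 1 by move=> /w_le; rewrite /c; lia.
have s'_gt0 : 0 < s - 1 by rewrite subn_gt0.
have [R [sR R_near]] := balanced_subgraph e_irr e_sym e_bip c_sym c_le s'_gt0.
by exists R; split=> //; have := mG_bound c_inj R_near; lia.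
Qed.
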